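(* Let $d\ge1$, $0<\epsilon<1$, and let $C_1,\ldots,C_n\in\mathbb{R}^{d+1}$ be a Pareto-optimal market for $\textsc{ProductDesign}(d)$. Let $r=\max\{\operatorname{ppu}(C_i): i\in\{1,\ldots,n\}\}$, $E=1/(1-\epsilon)$, $\ell=\lceil\log_E n\rceil$, and for $i\in\{0,\ldots,\ell\}$ let $H_i=\{(p,q_1,\ldots,q_d): p-\sum_{k=1}^d q_k=r(1-\epsilon)^i\}$. Then for every product $P^*=(p^*,q_1^*,\ldots,q_d^* )$ there exists a product $P\in H_i$ for some $i\in\{0,\ldots,\ell\}$ with $\operatorname{profit}(P)\ge(1-\epsilon)\operatorname{profit}(P^* )$.
   Context: A product $P=(p,q_1,\ldots,q_d)$ has price $p$ and qualities $q_k$; $\operatorname{ppu}(P)=p-\sum_k q_k$. Customer $C_i=(p_i,q_{i,1},\ldots,q_{i,d})$ buys $P$ iff $p\le p_i$ and $q_k\ge q_{i,k}$ for all $k$. $\operatorname{profit}(P)=\operatorname{ppu}(P)\cdot|\{i: C_i\text{ buys }P\}|$. Pareto-optimal: no two customers $C_i,C_j$ with $q_{i,k}>q_{j,k}$ for all $k$ and $p_i<p_j$. *)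

From HB Require Import structures.
From mathcomp Require Import all_boot all_order all_algebra.
From mathcomp Require Import all_classical all_reals all_analysis.
Set Implicit Arguments. Unset Strict Implicit. Unset Printing Implicit Defensive.
Import Order.TTheory GRing.Theory Num.Theory.
Local Open Scope ring_scope.

(* A product / customer is a price p : R together with a quality vector
   q : 'I_d -> R, i.e. a point (p, q_1, ..., q_d) of R^(d+1). *)

Definition ppu {R : realType} {d : nat} (p : R) (q : 'I_d -> R) : R :=
  p - \sum_(k < d) q k.

Definition buys {R : realType} {d : nat} (cp : R) (cq : 'I_d -> R)
  (p : R) (q : 'I_d -> R) : bool :=
  (p <= cp) && [forall k, cq k <= q k].

Definition profit {R : realType} {d n : nat} (cp : 'I_n -> R)
  (cq : 'I_n -> 'I_d -> R) (p : R) (q : 'I_d -> R) : R :=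
  ppu p q * (#|[set i : 'I_n | buys (cp i) (cq i) p q]|)%:R.

Definition pareto_optimal {R : realType} {d n : nat} (cp : 'I_n -> R)
  (cq : 'I_n -> 'I_d -> R) : Prop :=
  forall i j : 'I_n, ~ ((forall k, cq j k < cq i k) /\ cp i < cp j).

From HB Require Import structures.
From mathcomp Require Import all_boot all_order all_algebra.
From mathcomp Require Import all_classical all_reals all_analysis.
Set Implicit Arguments. Unset Strict Implicit. Unset Printing Implicit Defensive.
Import Order.TTheory GRing.Theory Num.Theory.
Local Open Scope ring_scope.

(* Let a = 1 - eps and let the given product have ppu u > 0; u <= r since u
   is at most the ppu of any of its buyers.  If r a^l <= u, take the least
   level i with r a^i <= u; then a u <= r a^i, and lowering the price until
   the ppu is r a^i keeps every buyer.  Otherwise u < r a^l <= r / n, so its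
   profit is below r, which the customer of maximal ppu earns as a product.
   A product of nonpositive profit is beaten by a product nobody buys. *)

Lemma ceil_log_level (R : realType) (x a : R) : 1 <= x -> 0 < a -> a < 1 ->
  exists2 L : nat, L%:Z = Num.ceil (ln x / ln a^-1) & x * a ^+ L <= 1.
Proof.
move=> x1 a0 a1.
have lnE : 0 < ln a^-1 by rewrite ln_gt0 // invf_gt1.
have lnx : 0 <= ln x by rewrite ln_ge0.
set l := Num.ceil _.
have l0 : 0 <= l by rewrite ceil_ge0 // (lt_le_trans _ (divr_ge0 lnx (ltW lnE))) // ltrN10.
exists `|l|%N; first by rewrite gez0_abs.
have hl : ln x / ln a^-1 <= (`|l|%N)%:R.
  by rewrite -[(`|l|%N)%:R]/((Posz `|l|%N)%:~R) gez0_abs //; apply: ceil_ge.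
have : ln x <= ln (a^-1 ^+ `|l|%N).
  by rewrite lnXn ?invr_gt0 // -mulr_natl -ler_pdivrMr.
rewrite ler_ln ?posrE ?(lt_le_trans ltr01 x1) ?exprn_gt0 ?invr_gt0 //.
by rewrite exprVn -div1r ler_pdivlMr ?exprn_gt0.
Qed.

Lemma exists_level_below (R : realFieldType) (a r u : R) (L : nat) :
  0 <= a -> a <= 1 -> 0 <= u -> u <= r -> r * a ^+ L <= u ->
  exists i : nat, [/\ (i <= L)%N, r * a ^+ i <= u & a * u <= r * a ^+ i].
Proof.
move=> a0 a1 u0 ur rL.
have [i Pi imin] := find_ex_minn (ex_intro (fun i => r * a ^+ i <= u) L rL).
exists i; split=> //; first exact: imin.
case: i Pi imin => [|k] _ imin.
  by rewrite expr0 mulr1 (le_trans _ ur) // ler_piMl.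
have uk : u < r * a ^+ k by rewrite ltNge; apply/negP => /imin; rewrite ltnn.
by rewrite exprS mulrCA ler_wpM2l // (ltW uk).
Qed.

Section Market.

Variables (R : realType) (d n : nat) (cp : 'I_n -> R) (cq : 'I_n -> 'I_d -> R).

Lemma ppu_reprice (t p : R) (q : 'I_d -> R) : ppu (p - (ppu p q - t)) q = t.
Proof. by rewrite {1}/ppu addrAC opprB addrC subrK. Qed.

Lemma ppu_le_buyer (i : 'I_n) (p : R) (q : 'I_d -> R) :
  buys (cp i) (cq i) p q -> ppu p q <= ppu (cp i) (cq i).
Proof.
by case/andP=> hp /forallP hq; rewrite /ppu lerB // ler_sum.
Qed.

Lemma buyers_lower_price (p p' : R) (q : 'I_d -> R) : p' <= p ->
  (#|[set i | buys (cp i) (cq i) p q]| <= #|[set i | buys (cp i) (cq i) p' q]|)%N.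
Proof.
move=> pp'; apply/subset_leq_card/fintype.subsetP => i.
by rewrite !inE /buys => /andP[/(le_trans pp') -> ->].
Qed.

Lemma profit_lower_ppu (t p : R) (q : 'I_d -> R) : 0 <= t -> t <= ppu p q ->
  t * (#|[set i | buys (cp i) (cq i) p q]|)%:R
    <= profit cp cq (p - (ppu p q - t)) q.
Proof.
move=> t0 tp; rewrite /profit ppu_reprice.
by rewrite ler_wpM2l // ler_nat buyers_lower_price // gerBl subr_ge0.
Qed.

Lemma exists_unsold_product (t : R) : (0 < d)%N ->
  exists (p : R) (q : 'I_d -> R), ppu p q = t /\ profit cp cq p q = 0.
Proof.
move=> d0; pose P := 1 + \sum_i `|cp i|.
exists P, (fun _ => (P - t) / d%:R); split.
  rewrite /ppu sumr_const card_ord -[_ *+ d]mulr_natr divfK ?pnatr_eq0 -?lt0n //.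
  by rewrite opprB addrC subrK.
rewrite /profit (eq_card0 (A := [set i | _])) ?mulr0 // => i; rewrite inE /buys.
suff : cp i < P by rewrite ltNge => /negbTE ->.
rewrite /P (bigD1 i) //= addrCA; apply: le_lt_trans (ler_norm _) _.
by rewrite ltrDl (lt_le_trans ltr01) // lerDl sumr_ge0.
Qed.

Lemma profit_gt0_buyer (p : R) (q : 'I_d -> R) : 0 < profit cp cq p q ->
  exists2 i, buys (cp i) (cq i) p q & 0 < ppu p q.
Proof.
rewrite /profit; have [i bi|nob] := pickP (fun i => buys (cp i) (cq i) p q).
  rewrite pmulr_lgt0; first by exists i.
  by rewrite ltr0n card_gt0; apply/set0Pn; exists i; rewrite inE.
by rewrite (eq_card0 (A := [set i | _])) ?mulr0 ?ltxx // => i; rewrite inE nob.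
Qed.

Lemma profit_le_ppu_mul_size (p : R) (q : 'I_d -> R) : 0 <= ppu p q ->
  profit cp cq p q <= ppu p q * n%:R.
Proof.
by move=> u0; rewrite /profit ler_wpM2l // ler_nat -[n in (_ <= n)%N]card_ord max_card.
Qed.

Lemma profit_customer_ge (j : 'I_n) : 0 <= ppu (cp j) (cq j) ->
  ppu (cp j) (cq j) <= profit cp cq (cp j) (cq j).
Proof.
move=> u0; rewrite /profit ler_peMr // ler1n card_gt0.
by apply/set0Pn; exists j; rewrite inE /buys lexx; apply/forallP.
Qed.

End Market.

Theorem lemma4 (R : realType) (d n : nat) (eps : R)
  (cp : 'I_n -> R) (cq : 'I_n -> 'I_d -> R) (r : R) :
  (1 <= d)%N -> (0 < n)%N -> 0 < eps -> eps < 1 ->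
  pareto_optimal cp cq ->
  (* r = max { ppu(C_i) : i < n } *)
  (exists i : 'I_n, r = ppu (cp i) (cq i)) ->
  (forall i : 'I_n, ppu (cp i) (cq i) <= r) ->
  let E := (1 - eps)^-1 in
  let l : int := Num.ceil (ln (n%:R) / ln E) in
  forall (pstar : R) (qstar : 'I_d -> R),
  exists i : nat, (i%:Z <= l)%R /\
    exists (p : R) (q : 'I_d -> R),
      ppu p q = r * (1 - eps) ^+ i /\
      (1 - eps) * profit cp cq pstar qstar <= profit cp cq p q.
Proof.
move=> d1 n0 e0 e1 _ [j rj] rmax E l pstar qstar.
set a := 1 - eps in E l *.
have a0 : 0 < a by rewrite subr_gt0.
have a1 : a < 1 by rewrite ltrBlDr ltrDl.
have n1 : 1 <= n%:R :> R by rewrite ler1n.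
have [L lL nL] := ceil_log_level n1 a0 a1.
have -> : l = L%:Z by rewrite /l /E lL.
set u := ppu pstar qstar.
have [hneg|hpos] := leP (profit cp cq pstar qstar) 0.
  exists 0%N; split=> //.
  have [p [q [pt p0]]] := exists_unsold_product cp cq (r * a ^+ 0) d1.
  by exists p, q; split=> //; rewrite p0 mulr_ge0_le0 // ltW.
have [i0 bi0 u0] := profit_gt0_buyer hpos.
have ur : u <= r := le_trans (ppu_le_buyer bi0) (rmax i0).
have [hlow|hhigh] := ltP u (r * a ^+ L).
  exists 0%N; split=> //; exists (cp j), (cq j); split; first by rewrite -rj expr0 mulr1.
  have r0 : 0 < r := lt_le_trans u0 ur.
  apply: le_trans (profit_customer_ge (ltW _)); rewrite -rj //.
  have unr : u * n%:R <= r.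
    rewrite (le_trans (ler_wpM2r (ler0n _ n) (ltW hlow))) //.
    by rewrite -mulrA [_ * n%:R]mulrC ler_piMr // ltW.
  apply: le_trans (ler_piMl (ltW hpos) (ltW a1)) _.
  exact: le_trans (profit_le_ppu_mul_size cp cq (ltW u0)) unr.
have [i [iL ri ai]] := exists_level_below (ltW a0) (ltW a1) (ltW u0) ur hhigh.
exists i; split; first by rewrite lez_nat.
exists (pstar - (u - r * a ^+ i)), qstar; split; first exact: ppu_reprice.
have rai0 : 0 <= r * a ^+ i := le_trans (mulr_ge0 (ltW a0) (ltW u0)) ai.
apply: le_trans (profit_lower_ppu cp cq rai0 ri).
by rewrite /profit -/u mulrA ler_wpM2r.
Qed.
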